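(* Let $d\ge2$ and let $Q$ be a qplex containing infinitely many points of the out-sphere $S_{\rm o}$. Then there is no polytope $P$ (convex hull of finitely many points) with $P\subseteq Q$ and $B_{\rm i}\subseteq P$; i.e., no polytope inscribed in $Q$ contains the in-sphere $S_{\rm i}$.
   Context: Fix an integer $d\ge 2$. $\langle\cdot,\cdot\rangle$ is the standard inner product on $\mathbb{R}^{d^2}$, $\|\cdot\|$ the Euclidean norm. $\Delta=\{p\in\mathbb{R}^{d^2}: p(i)\ge0,\ \sum_ip(i)=1\}$; $H=\{u\in\mathbb{R}^{d^2}:\sum_i u(i)=1\}$; $c=(1/d^2,\dots,1/d^2)$. For $A\subseteq H$ the polar is $A^*=\{u\in H:\langle u,v\rangle\ge\frac{1}{d(d+1)}\ \forall v\in A\}$. Out-ball $B_{\rm o}=\{u\in H:\|u-c\|\le r_{\rm o}\}$ with $r_{\rm o}^2=\frac{d-1}{d^2(d+1)}$, and out-sphere $S_{\rm o}=\{u\in H:\|u-c\|=r_{\rm o}\}$ (its points in a qplex are called pure points). In-ball $B_{\rm i}=\{u\in H:\|u-c\|\le r_{\rm i}\}$ with $r_{\rm i}^2=\frac{1}{d^2(d^2-1)}$ and in-sphere $S_{\rm i}$ its boundary in $H$. A qplex is a set $Q\subseteq\Delta\cap B_{\rm o}$ with $Q^*=Q$. *)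

(* classical reals. Vectors of R^{d^2} are functions nat -> R,
   only coordinates i < d*d are meaningful. *)
From Stdlib Require Export Reals List.
Open Scope R_scope.

Fixpoint sumN (n : nat) (f : nat -> R) : R :=
  match n with O => 0 | S k => sumN k f + f k end.

Definition dim (d : nat) : nat := (d * d)%nat.

Definition inner (d : nat) (u v : nat -> R) : R := sumN (dim d) (fun i => u i * v i).

Definition cvec (d : nat) : nat -> R := fun _ => 1 / (INR d * INR d).

Definition dist2c (d : nat) (u : nat -> R) : R :=
  sumN (dim d) (fun i => (u i - cvec d i) * (u i - cvec d i)).

Definition in_H (d : nat) (u : nat -> R) : Prop := sumN (dim d) u = 1.

Definition in_simplex (d : nat) (u : nat -> R) : Prop :=
  (forall i, (i < dim d)%nat -> 0 <= u i) /\ sumN (dim d) u = 1.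

Definition ro2 (d : nat) : R := (INR d - 1) / (INR d * INR d * (INR d + 1)).
Definition ri2 (d : nat) : R := 1 / (INR d * INR d * (INR d * INR d - 1)).

Definition in_out_ball (d : nat) (u : nat -> R) : Prop := in_H d u /\ dist2c d u <= ro2 d.
Definition in_out_sphere (d : nat) (u : nat -> R) : Prop := in_H d u /\ dist2c d u = ro2 d.
Definition in_in_ball (d : nat) (u : nat -> R) : Prop := in_H d u /\ dist2c d u <= ri2 d.

Definition polar (d : nat) (A : (nat -> R) -> Prop) (u : nat -> R) : Prop :=
  in_H d u /\ forall v, A v -> inner d u v >= 1 / (INR d * (INR d + 1)).

Definition qplex (d : nat) (Q : (nat -> R) -> Prop) : Prop :=
  (forall u, Q u -> in_simplex d u /\ in_out_ball d u) /\
  (forall u, Q u <-> polar d Q u).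

(* Q contains infinitely many pure points: no finite list covers them
   (as vectors, i.e. up to agreement on the coordinates i < d^2). *)
Definition infinitely_many_pure (d : nat) (Q : (nat -> R) -> Prop) : Prop :=
  ~ exists L : list (nat -> R),
      forall u, Q u -> in_out_sphere d u ->
        exists v, In v L /\ forall i, (i < dim d)%nat -> u i = v i.

Definition conv (d : nat) (m : nat) (pts : nat -> nat -> R) (x : nat -> R) : Prop :=
  exists lam : nat -> R,
    (forall j, (j < m)%nat -> 0 <= lam j) /\ sumN m lam = 1 /\
    forall i, (i < dim d)%nat -> x i = sumN m (fun j => lam j * pts j i).

From Stdlib Require Import Reals List Lra Lia ClassicalEpsilon.
Open Scope R_scope.

(* For a pure point u, the antipodal point v(u) = c - (u - c)/(d - 1) lies on
   the in-sphere and <u, v(u)> = 1/(d(d+1)) is the least value <u, .> can take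
   on Q.  If a polytope P with B_i <= P <= Q existed, write v(u') as a convex
   combination of vertices of P: every vertex used lies on the supporting
   hyperplane <u', .> = 1/(d(d+1)).  If u has the same set of vertices on its
   hyperplane, then also <u, v(u')> = 1/(d(d+1)), which forces <u, u'> = |u|^2
   = |u'|^2, i.e. u = u'.  Hence a pure point is determined by a subset of the
   finitely many vertices, and Q has only finitely many pure points. *)

Lemma sumN_ext n f g :
  (forall i, (i < n)%nat -> f i = g i) -> sumN n f = sumN n g.
Proof.
  induction n as [|n IH]; intros H; cbn [sumN]; [reflexivity|].
  rewrite IH by (intros; apply H; lia). rewrite (H n) by lia. reflexivity.
Qed.

Lemma sumN_add n f g : sumN n (fun i => f i + g i) = sumN n f + sumN n g.
Proof. induction n as [|n IH]; cbn [sumN]; [lra | rewrite IH; ring]. Qed.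

Lemma sumN_scal n a f : sumN n (fun i => a * f i) = a * sumN n f.
Proof. induction n as [|n IH]; cbn [sumN]; [ring | rewrite IH; ring]. Qed.

Lemma sumN_const n a : sumN n (fun _ => a) = INR n * a.
Proof. induction n as [|n IH]; cbn [sumN]; [simpl; ring | rewrite IH, S_INR; ring]. Qed.

Lemma sumN_swap n m F :
  sumN n (fun i => sumN m (fun j => F i j)) = sumN m (fun j => sumN n (fun i => F i j)).
Proof.
  induction n as [|n IH]; cbn [sumN].
  - rewrite sumN_const; ring.
  - rewrite IH, <- sumN_add; reflexivity.
Qed.

Lemma sumN_ge0 n f : (forall i, (i < n)%nat -> 0 <= f i) -> 0 <= sumN n f.
Proof.
  induction n as [|n IH]; intros H; cbn [sumN]; [lra|].
  assert (0 <= f n) by (apply H; lia).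
  assert (0 <= sumN n f) by (apply IH; intros; apply H; lia).
  lra.
Qed.

Lemma sumN_eq0_ge0 n f :
  (forall i, (i < n)%nat -> 0 <= f i) -> sumN n f = 0 ->
  forall i, (i < n)%nat -> f i = 0.
Proof.
  induction n as [|n IH]; intros H S i Hi; [lia|]. cbn [sumN] in S.
  assert (0 <= f n) by (apply H; lia).
  assert (0 <= sumN n f) by (apply sumN_ge0; intros; apply H; lia).
  destruct (Nat.eq_dec i n) as [->|]; [lra|].
  apply IH; [intros; apply H; lia | lra | lia].
Qed.

Lemma sumN_delta m j f :
  sumN m (fun k => if Nat.eqb k j then f k else 0) = if Nat.ltb j m then f j else 0.
Proof.
  induction m as [|m IH]; cbn [sumN]; [reflexivity|]. rewrite IH.
  destruct (Nat.eqb_spec m j), (Nat.ltb_spec j m), (Nat.ltb_spec j (S m));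
    subst; try lia; lra.
Qed.

(* A convex combination attaining the minimum of [a] only charges minimizers
   of [a], so it takes the value [k] on any [b] that equals [k] there. *)
Lemma convex_min_face m lam a b k :
  (forall j, (j < m)%nat -> 0 <= lam j) -> sumN m lam = 1 ->
  (forall j, (j < m)%nat -> k <= a j) ->
  sumN m (fun j => lam j * a j) = k ->
  (forall j, (j < m)%nat -> a j = k -> b j = k) ->
  sumN m (fun j => lam j * b j) = k.
Proof.
  intros Hlam Hsum Hmin Hk Hface.
  assert (Hslack : forall j, (j < m)%nat -> lam j * (a j - k) = 0).
  { apply sumN_eq0_ge0.
    - intros j Hj. apply Rmult_le_pos; [auto | specialize (Hmin j Hj); lra].
    - rewrite (sumN_ext _ _ (fun j => lam j * a j + (- k) * lam j)) by (intros; ring).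
      rewrite sumN_add, sumN_scal, Hk, Hsum; ring. }
  rewrite (sumN_ext _ _ (fun j => k * lam j)), sumN_scal, Hsum; [ring|].
  intros j Hj. destruct (Rmult_integral _ _ (Hslack j Hj)) as [->|Hak]; [ring|].
  rewrite Hface by (auto; lra); ring.
Qed.

Lemma INR_dim d : INR (dim d) = INR d * INR d.
Proof. apply mult_INR. Qed.

Lemma INR_ge2 d : (2 <= d)%nat -> 2 <= INR d.
Proof. intros; change 2 with (INR 2); apply le_INR; lia. Qed.

Lemma inner_in_H d u : (0 < d)%nat -> in_H d u ->
  inner d u u = dist2c d u + 1 / (INR d * INR d).
Proof.
  intros Hd Hu. assert (0 < INR d) by (apply lt_0_INR; lia).
  unfold dist2c, in_H, inner, cvec in *.
  set (c := 1 / (INR d * INR d)).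
  rewrite (sumN_ext (dim d) (fun i => (u i - c) * (u i - c))
                    (fun i => (u i * u i + (-2 * c) * u i) + c * c)) by (intros; ring).
  rewrite !sumN_add, sumN_scal, sumN_const, INR_dim, Hu.
  unfold c; field; lra.
Qed.

Lemma dist2_expand d u v :
  sumN (dim d) (fun i => (u i - v i) * (u i - v i))
  = inner d u u - 2 * inner d u v + inner d v v.
Proof.
  unfold inner.
  rewrite (sumN_ext _ _ (fun i => (u i * u i + (-2) * (u i * v i)) + v i * v i))
    by (intros; ring).
  rewrite !sumN_add, sumN_scal; ring.
Qed.

Lemma eq_of_inner d u v :
  inner d u v = inner d u u -> inner d u v = inner d v v ->
  forall i, (i < dim d)%nat -> u i = v i.
Proof.
  intros Huu Hvv i Hi.
  assert (S0 : sumN (dim d) (fun i => (u i - v i) * (u i - v i)) = 0)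
    by (rewrite dist2_expand; lra).
  pose proof (sumN_eq0_ge0 _ _ (fun i _ => Rle_0_sqr (u i - v i)) S0 i Hi) as Z.
  cbv beta in Z. apply Rmult_integral in Z. lra.
Qed.

Definition polar_const (d : nat) : R := 1 / (INR d * (INR d + 1)).

Definition antipode (d : nat) (u : nat -> R) : nat -> R :=
  fun i => cvec d i - 1 / (INR d - 1) * (u i - cvec d i).

Lemma inner_antipode d u w : in_H d u ->
  inner d u (antipode d w)
  = 1 / (INR d * INR d) - 1 / (INR d - 1) * (inner d u w - 1 / (INR d * INR d)).
Proof.
  intros Hu. unfold inner, antipode, cvec, in_H in *.
  set (c := 1 / (INR d * INR d)). set (t := 1 / (INR d - 1)).
  rewrite (sumN_ext _ _ (fun i => (c * u i + (-t) * (u i * w i)) + (t * c) * u i))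
    by (intros; ring).
  rewrite !sumN_add, !sumN_scal, Hu; ring.
Qed.

Lemma antipode_in_ball d u : (2 <= d)%nat -> in_out_sphere d u ->
  in_in_ball d (antipode d u).
Proof.
  intros Hd [Hu Hsph]. pose proof (INR_ge2 d Hd).
  unfold in_in_ball, in_H, dist2c, antipode, cvec in *.
  set (c := 1 / (INR d * INR d)) in *. set (t := 1 / (INR d - 1)). split.
  - rewrite (sumN_ext _ _ (fun i => (c + t * c) + (-t) * u i)) by (intros; ring).
    rewrite sumN_add, sumN_scal, sumN_const, INR_dim, Hu.
    unfold c, t; field; lra.
  - rewrite (sumN_ext _ _ (fun i => (t * t) * ((u i - c) * (u i - c)))) by (intros; ring).
    rewrite sumN_scal, Hsph. unfold t, ro2, ri2. right. field. repeat split; nra.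
Qed.

Lemma inner_pure d u : (2 <= d)%nat -> in_out_sphere d u ->
  inner d u u = ro2 d + 1 / (INR d * INR d).
Proof. intros Hd [Hu Hsph]. rewrite inner_in_H by (auto; lia). now rewrite Hsph. Qed.

Lemma inner_antipode_pure d u v : (2 <= d)%nat -> in_H d u -> in_out_sphere d v ->
  inner d u (antipode d v) = polar_const d <-> inner d u v = ro2 d + 1 / (INR d * INR d).
Proof.
  intros Hd Hu Hv. pose proof (INR_ge2 d Hd).
  assert (1 / (INR d - 1) <> 0) by (apply Rgt_not_eq, Rdiv_lt_0_compat; lra).
  assert (Hconst : 1 / (INR d * INR d) - 1 / (INR d - 1) * ro2 d = polar_const d)
    by (unfold polar_const, ro2; field; lra).
  rewrite inner_antipode by exact Hu. split; intros E.
  - apply (Rmult_eq_reg_l (1 / (INR d - 1))); [lra | assumption].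
  - rewrite E, <- Hconst. ring.
Qed.

Lemma inner_conv d m pts lam w x :
  (forall i, (i < dim d)%nat -> x i = sumN m (fun j => lam j * pts j i)) ->
  inner d w x = sumN m (fun j => lam j * inner d w (pts j)).
Proof.
  intros Hx. unfold inner.
  rewrite (sumN_ext _ _ (fun i => sumN m (fun j => w i * (lam j * pts j i)))).
  2:{ intros i Hi. rewrite Hx, <- sumN_scal by exact Hi. reflexivity. }
  rewrite sumN_swap. apply sumN_ext. intros j _.
  rewrite <- sumN_scal. apply sumN_ext. intros; ring.
Qed.

Lemma conv_vertex d m pts j : (j < m)%nat -> conv d m pts (pts j).
Proof.
  intros Hj. exists (fun k => if Nat.eqb k j then 1 else 0). split; [|split].
  - intros k _. destruct (Nat.eqb k j); lra.
  - rewrite (sumN_delta m j (fun _ => 1)). destruct (Nat.ltb_spec j m); [reflexivity|lia].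
  - intros i _. rewrite (sumN_ext _ _ (fun k => if Nat.eqb k j then pts k i else 0)).
    + rewrite (sumN_delta m j (fun k => pts k i)). destruct (Nat.ltb_spec j m); [reflexivity|lia].
    + intros k _. destruct (Nat.eqb k j); ring.
Qed.

Section InscribedPolytope.

Variables (d m : nat) (Q : (nat -> R) -> Prop) (pts : nat -> nat -> R).
Hypothesis d_ge2 : (2 <= d)%nat.
Hypothesis Q_qplex : qplex d Q.
Hypothesis hull_in_Q : forall x, conv d m pts x -> Q x.
Hypothesis ball_in_hull : forall x, in_in_ball d x -> conv d m pts x.

Lemma vertex_inner_ge w j : Q w -> (j < m)%nat -> polar_const d <= inner d w (pts j).
Proof.
  intros Qw Hj. destruct Q_qplex as [_ Hpolar].
  apply Hpolar in Qw as [_ Hw]. apply Rge_le, Hw, hull_in_Q, conv_vertex, Hj.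
Qed.

Lemma pure_eq_of_same_face u u' :
  Q u -> in_out_sphere d u -> Q u' -> in_out_sphere d u' ->
  (forall j, (j < m)%nat ->
     inner d u' (pts j) = polar_const d -> inner d u (pts j) = polar_const d) ->
  forall i, (i < dim d)%nat -> u i = u' i.
Proof.
  intros Qu Su Qu' Su' Hface.
  destruct (ball_in_hull _ (antipode_in_ball d u' d_ge2 Su')) as [lam [Hlam [Hsum Hx]]].
  assert (Hu' : inner d u' (antipode d u') = polar_const d).
  { apply inner_antipode_pure; [exact d_ge2 | apply Su' | exact Su' | now apply inner_pure]. }
  assert (Hu : inner d u (antipode d u') = polar_const d).
  { rewrite (inner_conv d m pts lam u _ Hx).
    rewrite (inner_conv d m pts lam u' _ Hx) in Hu'.
    apply (convex_min_face m lam (fun j => inner d u' (pts j))); auto.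
    intros j Hj; now apply vertex_inner_ge. }
  apply inner_antipode_pure in Hu; [|exact d_ge2 | apply Su | exact Su'].
  apply eq_of_inner.
  - now rewrite inner_pure.
  - now rewrite inner_pure.
Qed.

End InscribedPolytope.

Fixpoint bool_lists (k : nat) : list (list bool) :=
  match k with
  | O => nil :: nil
  | S k => flat_map (fun l => (true :: l) :: (false :: l) :: nil) (bool_lists k)
  end.

Lemma in_bool_lists l : In l (bool_lists (length l)).
Proof.
  induction l as [|b l IH]; simpl; [auto|].
  apply in_flat_map. exists l. split; [exact IH | destruct b; simpl; auto].
Qed.

Lemma finite_cover_of_signature (n m : nat) (P : (nat -> R) -> Prop)
  (sig : (nat -> R) -> list bool) :
  (forall u, length (sig u) = m) ->
  (forall u u', P u -> P u' -> sig u = sig u' -> forall i, (i < n)%nat -> u i = u' i) ->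
  exists L : list (nat -> R),
    forall u, P u -> exists v, In v L /\ forall i, (i < n)%nat -> u i = v i.
Proof.
  intros Hlen Hsig.
  set (rep := fun b => epsilon (inhabits (fun _ : nat => 0)) (fun u => P u /\ sig u = b)).
  exists (map rep (bool_lists m)). intros u Pu.
  assert (Hex : exists w, P w /\ sig w = sig u) by (exists u; auto).
  destruct (epsilon_spec (inhabits (fun _ : nat => 0)) _ Hex) as [Pw Ew].
  exists (rep (sig u)). split.
  - apply in_map. rewrite <- (Hlen u). apply in_bool_lists.
  - apply Hsig; auto.
Qed.

Definition face_signature (d m : nat) (pts : nat -> nat -> R) (u : nat -> R) : list bool :=
  map (fun j => if Req_EM_T (inner d u (pts j)) (polar_const d) then true else false)
      (seq 0 m).

Lemma face_signature_eq d m pts u u' :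
  face_signature d m pts u = face_signature d m pts u' -> forall j, (j < m)%nat ->
  inner d u' (pts j) = polar_const d -> inner d u (pts j) = polar_const d.
Proof.
  intros E j Hj. apply map_ext_in_iff with (a := j) in E; [|apply in_seq; lia].
  destruct (Req_EM_T (inner d u (pts j)) (polar_const d)),
           (Req_EM_T (inner d u' (pts j)) (polar_const d)); easy.
Qed.

Theorem mainTheorem6 (d : nat) (Q : (nat -> R) -> Prop) :
  (2 <= d)%nat -> qplex d Q -> infinitely_many_pure d Q ->
  ~ exists (m : nat) (pts : nat -> nat -> R),
      (forall x, conv d m pts x -> Q x) /\
      (forall x, in_in_ball d x -> conv d m pts x).
Proof.
  intros Hd HQ Hinf [m [pts [Hhull Hball]]]. apply Hinf.
  destruct (finite_cover_of_signature (dim d) m (fun u => Q u /\ in_out_sphere d u)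
              (face_signature d m pts)) as [L HL].
  - intros u. unfold face_signature. now rewrite length_map, length_seq.
  - intros u u' [Qu Su] [Qu' Su'] E.
    apply (pure_eq_of_same_face d m Q pts); auto.
    now apply face_signature_eq.
  - exists L. intros u Qu Su. now apply HL.
Qed.
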